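(* Let $G$ be a countably infinite graph and let $h:\mathbb{N}\to\mathbb{N}$. Then $h$ is online computable from the isomorphism type of $G$ if and only if $h$ is primitive recursive.
   Context: A presentation of $G$ is a graph with vertex set $\mathbb{N}$ isomorphic to $G$. For a presentation $\alpha$ and $m\in\mathbb{N}$, let $\alpha\upharpoonright m$ denote the finite string coding the induced subgraph of $\alpha$ on the vertices $\{0,\dots,m-1\}$ (listing, for each vertex, its adjacencies with the earlier vertices). A function $h:\mathbb{N}\to\mathbb{N}$ is online computable from the isomorphism type of $G$ if there are primitive recursive functions $u:\mathbb{N}\to\mathbb{N}$ (the use) and $F$ such that for every presentation $\alpha$ of $G$ and every $i$, $h(i)=F(\alpha\upharpoonright u(i), i)$. (Equivalently, $h$ is computed from every presentation $\alpha$ by a single primitive recursive functional with oracle $\alpha$; by the robustness lemma such a functional has a primitive recursive use, since the space of presentations is primitively recursively branching.) *)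

From mathcomp Require Import all_boot.
Set Implicit Arguments. Unset Strict Implicit. Unset Printing Implicit Defensive.

(* [PRk k f] : f, viewed as a function of k natural-number arguments
   (given as a list of length k; values on lists of other lengths are
   irrelevant), is primitive recursive. *)
Definition prim_rec_op (g : seq nat -> nat) (h : seq nat -> nat)
  (v : seq nat) : nat :=
  let w := behead v in
  nat_rec (fun _ => nat) (g w) (fun n r => h [:: n, r & w]) (head 0 v).

Inductive PRk : nat -> (seq nat -> nat) -> Prop :=
| PRk_zero k : PRk k (fun _ => 0)
| PRk_succ : PRk 1 (fun v => (nth 0 v 0).+1)
| PRk_proj k i : i < k -> PRk k (fun v => nth 0 v i)
| PRk_comp k m (g : seq nat -> nat) (hs : seq (seq nat -> nat)) :
    size hs = m -> PRk m g ->
    (forall j, j < m -> PRk k (nth (fun _ => 0) hs j)) ->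
    PRk k (fun v => g (map (fun h => h v) hs))
| PRk_rec k (g h : seq nat -> nat) :
    PRk k g -> PRk k.+2 h -> PRk k.+1 (prim_rec_op g h)
| PRk_ext k (f f' : seq nat -> nat) :
    PRk k f -> (forall v, size v = k -> f v = f' v) -> PRk k f'.

Definition prim_rec1 (h : nat -> nat) : Prop := PRk 1 (fun v => h (nth 0 v 0)).
Definition prim_rec2 (F : nat -> nat -> nat) : Prop :=
  PRk 2 (fun v => F (nth 0 v 0) (nth 0 v 1)).

Definition simple_graph (V : Type) (E : V -> V -> Prop) : Prop :=
  (forall x y, E x y -> E y x) /\ (forall x, ~ E x x).

Definition countably_infinite (V : Type) : Prop :=
  exists f : nat -> V, bijective f.

Definition presentation (V : Type) (E : V -> V -> Prop)
  (alpha : nat -> nat -> bool) : Prop :=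
  exists f : nat -> V, bijective f /\ forall x y, alpha x y <-> E (f x) (f y).

(* Code of a finite binary string: b_0 ... b_{L-1} |-> 2^L + sum b_i 2^i. *)
Definition bits_code (s : seq bool) : nat :=
  foldr (fun (b : bool) n => b + n.*2) 1 s.

(* alpha |` m : for each vertex j < m (in order), its adjacencies with the
   earlier vertices k < j. *)
Definition restr_string (alpha : nat -> nat -> bool) (m : nat) : seq bool :=
  flatten [seq [seq alpha j k | k <- iota 0 j] | j <- iota 0 m].

Definition restr_code (alpha : nat -> nat -> bool) (m : nat) : nat :=
  bits_code (restr_string alpha m).

Definition online_computable (V : Type) (E : V -> V -> Prop)
  (h : nat -> nat) : Prop :=
  exists (u : nat -> nat) (F : nat -> nat -> nat),
    prim_rec1 u /\ prim_rec2 F /\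
    forall alpha, presentation E alpha ->
      forall i, h i = F (restr_code alpha (u i)) i.

From mathcomp Require Import all_boot zify.
From Stdlib Require Import Classical ClassicalEpsilon.
Set Implicit Arguments. Unset Strict Implicit.

(* A primitive recursive h is online computable with use 0, ignoring the
   presentation.  Conversely, suppose h i = F (alpha |` u i, i) for every
   presentation alpha.  By the finite Ramsey theorem (R(a,b) <= 2^(a+b)),
   every symmetric 2-colouring of pairs of naturals has arbitrarily large
   homogeneous sets, and by an infinite pigeonhole argument one colour c
   works for all sizes.  Reordering the vertices of G so that a homogeneous
   set of size m comes first yields a presentation whose restriction to m
   vertices is the constant string of length 'C(m, 2) in colour c.  Hence
   h i = F (code of c^('C(u i, 2)), i), a composition of primitive recursive
   functions. *)

Lemma PR_comp1 k (g : nat -> nat) (f : seq nat -> nat) :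
  prim_rec1 g -> PRk k f -> PRk k (fun v => g (f v)).
Proof.
move=> Hg Hf.
apply: (PRk_ext (PRk_comp (hs := [:: f]) (m := 1) erefl Hg _)) => //.
by case=> //= _.
Qed.

Lemma PR_comp2 k (g : nat -> nat -> nat) (f1 f2 : seq nat -> nat) :
  prim_rec2 g -> PRk k f1 -> PRk k f2 -> PRk k (fun v => g (f1 v) (f2 v)).
Proof.
move=> Hg H1 H2.
apply: (PRk_ext (PRk_comp (hs := [:: f1; f2]) (m := 2) erefl Hg _)) => //.
by case=> [|[|]] //= _.
Qed.

Lemma PR_const k c : PRk k (fun _ => c).
Proof.
elim: c => [|c IH]; first exact: PRk_zero.
exact: (PR_comp1 (g := succn) PRk_succ IH).
Qed.

Lemma PR_rec1 (f : nat -> nat) (step : nat -> nat -> nat) :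
  prim_rec2 step -> (forall n, f n.+1 = step n (f n)) -> prim_rec1 f.
Proof.
move=> Hstep Hf.
apply: (PRk_ext (PRk_rec (PR_const 0 (f 0)) Hstep)).
case=> [|x [|]] //= _; rewrite /prim_rec_op /=.
by elim: x => //= x ->; rewrite Hf.
Qed.

Lemma PR_rec2 (f : nat -> nat -> nat) (step : nat -> nat -> nat -> nat) :
  prim_rec1 (f 0) ->
  PRk 3 (fun v => step (nth 0 v 0) (nth 0 v 1) (nth 0 v 2)) ->
  (forall n y, f n.+1 y = step n (f n y) y) -> prim_rec2 f.
Proof.
move=> Hbase Hstep Hf.
apply: (PRk_ext (PRk_rec Hbase Hstep)).
case=> [|x [|y [|]]] //= _; rewrite /prim_rec_op /=.
by elim: x => //= x ->; rewrite Hf.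
Qed.

Lemma PR_add : prim_rec2 addn.
Proof.
apply: (PR_rec2 (step := fun _ r _ => r.+1)) => //.
  exact: PRk_proj.
exact: (PR_comp1 PRk_succ (PRk_proj _)).
Qed.

Lemma PR_mul : prim_rec2 muln.
Proof.
apply: (PR_rec2 (step := fun _ r y => r + y)) => [||n y]; last by rewrite mulSn addnC.
  exact: PR_const.
by apply: (PR_comp2 PR_add); exact: PRk_proj.
Qed.

Lemma PR_pred : prim_rec1 predn.
Proof. by apply: (PR_rec1 (step := fun n _ => n)) => //; exact: PRk_proj. Qed.

Lemma PR_pow2 : prim_rec1 (expn 2).
Proof.
apply: (PR_rec1 (step := fun _ r => r + r)) => [|n]; last by rewrite expnS mul2n addnn.
by apply: (PR_comp2 PR_add); exact: PRk_proj.
Qed.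

(* 2 ^ 'C(m, 2), the code of the all-false string on m vertices. *)
Lemma PR_pow2_bin2 : prim_rec1 (fun m => 2 ^ 'C(m, 2)).
Proof.
apply: (PR_rec1 (step := fun n r => r * 2 ^ n)) => [|n]; last by rewrite binS bin1 expnD.
apply: (PR_comp2 PR_mul); first exact: PRk_proj.
exact: (PR_comp1 PR_pow2 (PRk_proj _)).
Qed.

Section Ramsey.
Variables (T : eqType) (r : rel T).
Hypothesis r_sym : forall x y, r x y = r y x.

Definition hom (c : bool) (t : seq T) :=
  forall x y, x \in t -> y \in t -> x != y -> r x y = c.

Definition homset (c : bool) (n : nat) (s t : seq T) :=
  [/\ uniq t, size t = n, {subset t <= s} & hom c t].

Definition nbhd (c : bool) (x : T) (s : seq T) := [seq y <- s | r x y == c].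

Lemma size_nbhd x s : size (nbhd true x s) + size (nbhd false x s) = size s.
Proof. by elim: s => //= y s IH; case: (r x y) => /=; rewrite ?addSn ?addnS IH. Qed.

Lemma homset_sub c n s s' t :
  {subset s' <= s} -> homset c n s' t -> homset c n s t.
Proof. by move=> ss' [tu ts tsub th]; split=> // y /tsub /ss'. Qed.

Lemma homset_cons c n x s t :
  x \notin s -> homset c n (nbhd c x s) t -> homset c n.+1 (x :: s) (x :: t).
Proof.
move=> xs [tu ts tsub th].
have tN y : y \in t -> (y \in s) && (r x y == c) by move/tsub; rewrite mem_filter andbC.
split; rewrite /= ?ts //.
- by rewrite tu andbT; apply: contra xs => /tN /andP [].
- move=> y; rewrite !inE => /orP [->//|/tN /andP [->]]; by rewrite orbT.
move=> y z; rewrite !inE => /orP [/eqP ->|yt] /orP [/eqP ->|zt].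
- by rewrite eqxx.
- by have /andP [_ /eqP] := tN _ zt.
- by rewrite r_sym; have /andP [_ /eqP] := tN _ yt.
exact: th.
Qed.

Lemma ramsey a b s : uniq s -> 2 ^ (a + b) <= size s ->
  (exists t, homset true a s t) \/ (exists t, homset false b s t).
Proof.
elim: a b s => [|a IHa] b s; first by left; exists [::].
elim: b s => [|b IHb] s; first by right; exists [::].
case: s => [|x s] /=; first by rewrite leqNgt expn_gt0.
move=> /andP [xs su] Hs.
have := size_nbhd x s.
have [Htrue|Hfalse] := leqP (2 ^ (a + b.+1)) (size (nbhd true x s)) => Hsz.
  have [[t Ht]|[t Ht]] := IHa b.+1 _ (filter_uniq _ su) Htrue.
    by left; exists (x :: t); exact: homset_cons.
  right; exists t; apply: homset_sub Ht => y; rewrite mem_filter inE => /andP [_ ->].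
  by rewrite orbT.
have Hfalse' : 2 ^ (a.+1 + b) <= size (nbhd false x s).
  by rewrite addSn -addnS; move: Hs; rewrite addSn expnS; lia.
have [[t Ht]|[t Ht]] := IHb _ (filter_uniq _ su) Hfalse'.
  left; exists t; apply: homset_sub Ht => y; rewrite mem_filter inE => /andP [_ ->].
  by rewrite orbT.
by right; exists (x :: t); exact: homset_cons.
Qed.

End Ramsey.

(* Some colour has homogeneous sets of every finite size: if false fails
   at size b, Ramsey with parameters (m, b) yields true-homogeneous m-sets. *)
Lemma unbounded_hom (r : rel nat) : (forall x y, r x y = r y x) ->
  exists c, forall m, exists t, [/\ uniq t, size t = m & hom r c t].
Proof.
move=> r_sym.
have [Hfalse|] := classic (forall m, exists t, [/\ uniq t, size t = m & hom r false t]).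
  by exists false.
move=> /not_all_ex_not [b Hb]; exists true => m.
have [[t [? ? _ ?]]|[t [? ? _ ?]]] :=
  ramsey r_sym (iota_uniq 0 (2 ^ (m + b))) (eq_leq (esym (size_iota _ _))).
  by exists t.
by case: Hb; exists t.
Qed.

Definition transp (a b k : nat) := if k == a then b else if k == b then a else k.

Lemma transpK a b : involutive (transp a b).
Proof.
move=> k; rewrite /transp.
have [->|ka] := eqVneq k a; first by rewrite eqxx; case: eqVneq.
have [->|kb] := eqVneq k b; first by rewrite eqxx.
by rewrite (negbTE ka) (negbTE kb).
Qed.

Lemma extend_to_bijection (t : seq nat) : uniq t ->
  exists p : nat -> nat, bijective p /\ forall j, j < size t -> p j = nth 0 t j.
Proof.
elim/last_ind: t => [_|t x IH]; first by exists id; split=> //; exists id.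
rewrite rcons_uniq => /andP [xt /IH [p [[q pq qp] Hp]]].
exists (p \o transp (size t) (q x)); split.
  by apply: bij_comp; [exists q | exists (transp (size t) (q x)); exact: transpK].
move=> j; rewrite size_rcons ltnS leq_eqVlt => /orP [/eqP ->|jt].
  by rewrite /= /transp eqxx qp nth_rcons ltnn eqxx.
have jqx : j != q x.
  by apply: contra xt => /eqP E; rewrite -(qp x) -E Hp // mem_nth.
rewrite /= /transp (negbTE jqx) ifN; last by rewrite neq_ltn jt.
by rewrite Hp // nth_rcons jt.
Qed.

Lemma restr_string_const (alpha : nat -> nat -> bool) c m :
  (forall j k, k < j < m -> alpha j k = c) ->
  restr_string alpha m = nseq 'C(m, 2) c.
Proof.
elim: m => [//|m IH] Halpha.
rewrite /restr_string -addn1 iotaD map_cat flatten_cat /= cats0 add0n.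
rewrite -/(restr_string alpha m) IH => [|j k /andP [kj jm]]; last first.
  by apply: Halpha; rewrite kj ltnS ltnW.
rewrite addn1 binS bin1 nseqD; congr (_ ++ _).
apply: (@eq_from_nth _ c); first by rewrite size_map size_iota size_nseq.
move=> k; rewrite size_map size_iota => km.
rewrite (nth_map 0) ?size_iota // nth_iota // nth_nseq km add0n.
by apply: Halpha; rewrite km ltnSn.
Qed.

Lemma bits_code_false L : bits_code (nseq L false) = 2 ^ L.
Proof. by elim: L => //= L ->; rewrite expnS add0n -mul2n. Qed.

Lemma bits_code_true L : bits_code (nseq L true) = (2 ^ L + 2 ^ L).-1.
Proof. by elim: L => //= L ->; rewrite expnS; have := expn_gt0 2 L; lia. Qed.

Lemma PR_const_code (c : bool) : prim_rec1 (fun m => bits_code (nseq 'C(m, 2) c)).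
Proof.
case: c; last by apply: PRk_ext PR_pow2_bin2 _ => v _; rewrite bits_code_false.
apply: PRk_ext (PR_comp1 PR_pred (PR_comp2 PR_add PR_pow2_bin2 PR_pow2_bin2)) _.
by move=> v _; rewrite bits_code_true.
Qed.

Definition decide (P : Prop) : bool :=
  if excluded_middle_informative P then true else false.

Lemma decideP (P : Prop) : decide P <-> P.
Proof. by rewrite /decide; case: excluded_middle_informative. Qed.

Lemma enum_presentation V (E : V -> V -> Prop) (f : nat -> V) :
  bijective f -> presentation E (fun x y => decide (E (f x) (f y))).
Proof. by move=> f_bij; exists f; split=> // x y; exact: decideP. Qed.

Lemma homogeneous_presentations V (E : V -> V -> Prop) :
  simple_graph E -> countably_infinite V ->
  exists c, forall m, exists alpha, presentation E alpha /\
    forall j k, k < j < m -> alpha j k = c.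
Proof.
move=> [E_sym _] [f f_bij].
pose r : rel nat := fun x y => decide (E (f x) (f y)).
have r_sym x y : r x y = r y x.
  by apply/idP/idP => /decideP/E_sym/decideP.
have [c Hc] := unbounded_hom r_sym.
exists c => m; have [t [tu tsize thom]] := Hc m.
have [p [p_bij Hp]] := extend_to_bijection tu.
exists (fun x y => r (p x) (p y)); split.
  by apply: (enum_presentation E (f := f \o p)); exact: bij_comp.
move=> j k /andP [kj jm]; rewrite !Hp ?tsize ?(ltn_trans kj) //.
by apply: thom; rewrite ?mem_nth ?nth_uniq ?tsize ?(ltn_trans kj) ?neq_ltn ?kj ?orbT.
Qed.

Lemma online_value_const V (E : V -> V -> Prop) (u : nat -> nat)
    (F : nat -> nat -> nat) (h : nat -> nat) :
  simple_graph E -> countably_infinite V ->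
  (forall alpha, presentation E alpha ->
     forall i, h i = F (restr_code alpha (u i)) i) ->
  exists c, forall i, h i = F (bits_code (nseq 'C(u i, 2) c)) i.
Proof.
move=> hG hV Hh; have [c Hc] := homogeneous_presentations hG hV.
exists c => i; have [alpha [alpha_pres alpha_hom]] := Hc (u i).
by rewrite (Hh _ alpha_pres) /restr_code (restr_string_const alpha_hom).
Qed.

Theorem mainTheorem2 (V : Type) (E : V -> V -> Prop)
  (hG : simple_graph E) (hV : countably_infinite V) (h : nat -> nat) :
  online_computable E h <-> prim_rec1 h.
Proof.
split=> [[u [F [Hu [HF Hh]]]]|Hh].
  have [c Hc] := online_value_const hG hV Hh.
  apply: PRk_ext (PR_comp2 HF (PR_comp1 (PR_const_code c) Hu) (@PRk_proj 1 0 erefl)) _.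
  by move=> v _; rewrite Hc.
exists (fun _ => 0), (fun _ i => h i); split; first exact: PRk_zero.
by split=> //; exact: (PR_comp1 Hh (@PRk_proj 2 1 erefl)).
Qed.
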